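(* Let $\kappa > \omega$ be a regular cardinal. Suppose $F \subseteq [\kappa]^\kappa$ is an unreaped family with $|F| = \mathfrak{r}(\kappa)$, and suppose there is a club $E_1 \subseteq \kappa$ such that for every club $E \subseteq E_1$ there exists $A \in F$ with $|A \setminus \mathrm{set}(E, E_1)| < \kappa$. Then $\mathfrak{d}(\kappa) \leq \mathfrak{r}(\kappa)$.
   Context: For $A \in [\kappa]^\kappa$ define $s_A:\kappa\to A$ by $s_A(\alpha) = \min(A \setminus (\alpha+1))$. For clubs $E_2 \subseteq E_1 \subseteq \kappa$ and $\xi \in \kappa$ let $\mathrm{set}(E_1,\xi) = \{\zeta : \xi \leq \zeta < s_{E_1}(\xi)\}$ and $\mathrm{set}(E_2,E_1) = \bigcup\{\mathrm{set}(E_1,\xi) : \xi \in E_2\}$. For $F \subseteq [\kappa]^\kappa$ and $B \subseteq \kappa$, $B$ reaps $F$ if $|A \cap B| = |A \cap (\kappa \setminus B)| = \kappa$ for every $A \in F$; $F$ is unreaped if no $B \subseteq \kappa$ reaps $F$; $\mathfrak{r}(\kappa)$ is the least size of an unreaped family in $[\kappa]^\kappa$. For $f,g\in\kappa^\kappa$, $f \leq^* g$ means $|\{\alpha : g(\alpha)<f(\alpha)\}|<\kappa$; $F\subseteq \kappa^\kappa$ is dominating if every $g \in \kappa^\kappa$ satisfies $g \leq^* f$ for some $f\in F$; $\mathfrak{d}(\kappa)$ is the least size of a dominating family. *)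

(* The regular cardinal kappa is modelled as a type K carrying a
   strict well-order lt (its elements are the ordinals < kappa). *)
Set Implicit Arguments.

Section KappaDefs.
Variable K : Type.
Variable lt : K -> K -> Prop.

Definition le (x y : K) : Prop := lt x y \/ x = y.

(* |X| >= kappa (for X a subset of kappa, this is |X| = kappa) *)
Definition size_kappa (X : K -> Prop) : Prop :=
  exists f : K -> {x : K | X x}, forall a b, f a = f b -> a = b.

Definition small (X : K -> Prop) : Prop := ~ size_kappa X.

Definition regular_uncountable_cardinal : Prop :=
  (forall x, ~ lt x x) /\
  (forall x y z, lt x y -> lt y z -> lt x z) /\
  (forall x y, lt x y \/ x = y \/ lt y x) /\
  well_founded lt /\
  (* kappa is a cardinal: every initial segment has size < kappa *)
  (forall a, small (fun b => lt b a)) /\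
  (~ exists f : K -> nat, forall a b, f a = f b -> a = b) /\
  (* regularity: every unbounded subset has size kappa *)
  (forall X : K -> Prop, (forall a, exists b, X b /\ le a b) -> size_kappa X).

Definition unbounded (C : K -> Prop) : Prop :=
  forall a, exists b, C b /\ le a b.

Definition closed (C : K -> Prop) : Prop :=
  forall a, (exists g, C g /\ lt g a) ->
            (forall b, lt b a -> exists g, C g /\ lt b g /\ lt g a) -> C a.

Definition club (C : K -> Prop) : Prop := closed C /\ unbounded C.

(* s = s_A(a) = min (A \ (a+1)) *)
Definition is_next (A : K -> Prop) (a s : K) : Prop :=
  A s /\ lt a s /\ forall e, A e -> lt a e -> le s e.

Definition set1 (E1 : K -> Prop) (xi : K) (z : K) : Prop :=
  exists s, is_next E1 xi s /\ le xi z /\ lt z s.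

Definition set2 (E2 E1 : K -> Prop) (z : K) : Prop :=
  exists xi, E2 xi /\ set1 E1 xi z.

Definition in_kk (F : (K -> Prop) -> Prop) : Prop :=
  forall A, F A -> size_kappa A.

Definition reaps (B : K -> Prop) (F : (K -> Prop) -> Prop) : Prop :=
  forall A, F A -> size_kappa (fun x => A x /\ B x) /\
                   size_kappa (fun x => A x /\ ~ B x).

Definition unreaped (F : (K -> Prop) -> Prop) : Prop :=
  ~ exists B, reaps B F.

Definition le_star (f g : K -> K) : Prop := small (fun a => lt (g a) (f a)).

Definition dominating (D : (K -> K) -> Prop) : Prop :=
  forall g, exists f, D f /\ le_star g f.
End KappaDefs.

Definition card_le (T U : Type) (P : T -> Prop) (Q : U -> Prop) : Prop :=
  exists f : {x : T | P x} -> {y : U | Q y}, forall a b, f a = f b -> a = b.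

(* For A in F let f_A(α) = s_A(s_{E1}(α)).  Given g : κ -> κ, the points of E1
   closed under g form a club E ⊆ E1, so some A ∈ F is almost contained in
   set(E, E1).  A value f_A(α) < g(α) cannot lie in set(E, E1): the block of E1
   containing it starts at some ξ ∈ E with ξ ≥ s_{E1}(α) > α, hence ξ > g(α).
   So g <=* f_A, and {f_A : A ∈ F} is a dominating family of size at most |F|. *)
From Stdlib Require Import Classical ClassicalEpsilon ProofIrrelevance.
Set Implicit Arguments.

Lemma well_founded_min (T : Type) (R : T -> T -> Prop) (P : T -> Prop) :
  well_founded R -> (exists x, P x) -> exists x, P x /\ forall y, P y -> ~ R y x.
Proof.
  intros Hwf [x0 Hx0]. apply NNPP; intro Hn.
  assert (Hnone : forall x, ~ P x).
  { intro x. induction x as [x IH] using (well_founded_ind Hwf).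
    intro Px. apply Hn. exists x. split; [exact Px|]. intros y Py Hy. exact (IH y Hy Py). }
  exact (Hnone x0 Hx0).
Qed.

Lemma sig_val_inj (T : Type) (P : T -> Prop) (u v : {x : T | P x}) :
  proj1_sig u = proj1_sig v -> u = v.
Proof. apply eq_sig_hprop. intros; apply proof_irrelevance. Qed.

Lemma small_subset (T : Type) (X Y : T -> Prop) :
  (forall x, X x -> Y x) -> small Y -> small X.
Proof.
  intros HXY HY [f Hf]. apply HY.
  exists (fun k => exist _ (proj1_sig (f k)) (HXY _ (proj2_sig (f k)))).
  intros a b E. apply Hf, sig_val_inj. exact (f_equal (@proj1_sig _ _) E).
Qed.

Lemma small_image (T : Type) (g : T -> T) (X : T -> Prop) :
  small X -> small (fun z => exists y, X y /\ z = g y).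
Proof.
  intros HX [h Hh]. apply HX.
  pose (pre k := constructive_indefinite_description _ (proj2_sig (h k))).
  exists (fun k => exist _ (proj1_sig (pre k)) (proj1 (proj2_sig (pre k)))).
  intros a b E. apply Hh, sig_val_inj.
  rewrite (proj2 (proj2_sig (pre a))), (proj2 (proj2_sig (pre b))).
  exact (f_equal (fun u => g (proj1_sig u)) E).
Qed.

Lemma size_kappa_singleton (T : Type) (m : T) :
  size_kappa (fun x => x = m) -> forall a b : T, a = b.
Proof.
  intros [f Hf] a b. apply Hf, sig_val_inj.
  rewrite (proj2_sig (f a)), (proj2_sig (f b)). reflexivity.
Qed.

Lemma size_kappa_range_countable (T : Type) (x : nat -> T) :
  size_kappa (fun y => exists n, y = x n) ->
  exists f : T -> nat, forall a b, f a = f b -> a = b.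
Proof.
  intros [h Hh].
  pose (idx k := constructive_indefinite_description _ (proj2_sig (h k))).
  exists (fun k => proj1_sig (idx k)). intros a b E. apply Hh, sig_val_inj.
  rewrite (proj2_sig (idx a)), (proj2_sig (idx b)), E. reflexivity.
Qed.

Lemma card_le_image (T U : Type) (P : U -> Prop) (h : U -> T) :
  card_le (fun t => exists u, P u /\ t = h u) P.
Proof.
  pose (pre (p : {t | exists u, P u /\ t = h u}) :=
          constructive_indefinite_description _ (proj2_sig p)).
  exists (fun p => exist _ (proj1_sig (pre p)) (proj1 (proj2_sig (pre p)))).
  intros p q E. apply sig_val_inj.
  rewrite (proj2 (proj2_sig (pre p))), (proj2 (proj2_sig (pre q))).
  exact (f_equal (fun u => h (proj1_sig u)) E).
Qed.

Section RegularCardinal.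
Variables (K : Type) (lt : K -> K -> Prop).
Hypothesis Hk : regular_uncountable_cardinal lt.

Let lt_irrefl : forall x, ~ lt x x := proj1 Hk.
Let lt_trans : forall x y z, lt x y -> lt y z -> lt x z := proj1 (proj2 Hk).
Let lt_total : forall x y, lt x y \/ x = y \/ lt y x := proj1 (proj2 (proj2 Hk)).
Let lt_wf : well_founded lt := proj1 (proj2 (proj2 (proj2 Hk))).
Let segment_small : forall a, small (fun b => lt b a) :=
  proj1 (proj2 (proj2 (proj2 (proj2 Hk)))).
Let not_countable : ~ exists f : K -> nat, forall a b, f a = f b -> a = b :=
  proj1 (proj2 (proj2 (proj2 (proj2 (proj2 Hk))))).
Let unbounded_size_kappa : forall X, (forall a, exists b, X b /\ le lt a b) -> size_kappa X :=
  proj2 (proj2 (proj2 (proj2 (proj2 (proj2 Hk))))).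

Lemma le_lt_trans x y z : le lt x y -> lt y z -> lt x z.
Proof. intros [H| <-] Hyz; [exact (lt_trans H Hyz)|exact Hyz]. Qed.

Lemma lt_le_trans x y z : lt x y -> le lt y z -> lt x z.
Proof. intros Hxy [H| <-]; [exact (lt_trans Hxy H)|exact Hxy]. Qed.

Lemma le_trans x y z : le lt x y -> le lt y z -> le lt x z.
Proof. intros [H| <-] Hyz; [left; exact (lt_le_trans H Hyz)|exact Hyz]. Qed.

Lemma not_lt_le x y : ~ lt x y -> le lt y x.
Proof. intro H. destruct (lt_total x y) as [?|[->|?]]; [contradiction|right|left]; auto. Qed.

Lemma le_antisym x y : le lt x y -> le lt y x -> x = y.
Proof.
  intros [Hxy| ->] Hyx; [|reflexivity].
  exfalso. exact (lt_irrefl (lt_le_trans Hxy Hyx)).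
Qed.

Lemma small_bounded X : small X -> exists c, forall x, X x -> lt x c.
Proof.
  intro HX. apply NNPP; intro Hn. apply HX, unbounded_size_kappa.
  intro a. apply NNPP; intro Ha. apply Hn. exists a. intros x Xx.
  apply NNPP; intro Hxa. apply Ha. exists x. split; [exact Xx|apply not_lt_le, Hxa].
Qed.

(* A maximum m would make the singleton {m} unbounded, hence of size κ. *)
Lemma exists_gt m : exists b, lt m b.
Proof.
  apply NNPP; intro Hn. apply not_countable. exists (fun _ => 0). intros a b _.
  apply (size_kappa_singleton (m := m)). apply unbounded_size_kappa. intro c.
  exists m. split; [reflexivity|]. apply not_lt_le. intro H. apply Hn. exists c; exact H.
Qed.

Lemma size_kappa_exists_gt A : size_kappa A -> forall a, exists b, A b /\ lt a b.
Proof.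
  intros HA a. apply NNPP; intro Hn. destruct (exists_gt a) as [a' Ha'].
  apply (small_subset (X := A) (Y := fun b => lt b a')); [|apply segment_small|exact HA].
  intros x Ax. apply (le_lt_trans (y := a)); [|exact Ha'].
  apply not_lt_le. intro H. apply Hn. exists x. split; assumption.
Qed.

Lemma club_exists_gt E : club lt E -> forall a, exists b, E b /\ lt a b.
Proof.
  intros [_ HU] a. destruct (exists_gt a) as [a' Ha']. destruct (HU a') as [b [Eb Hb]].
  exists b. split; [exact Eb|exact (lt_le_trans Ha' Hb)].
Qed.

(* The paper's s_X(a); an arbitrary value when X is bounded by a. *)
Definition next_in (X : K -> Prop) (a : K) : K := epsilon (inhabits a) (is_next lt X a).

Lemma next_in_spec X a : (exists b, X b /\ lt a b) -> is_next lt X a (next_in X a).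
Proof.
  intro H. unfold next_in. apply epsilon_spec.
  destruct (well_founded_min _ lt_wf H) as [s [[Xs Has] Hmin]].
  exists s. split; [exact Xs|split; [exact Has|]].
  intros e Xe Hae. apply not_lt_le. intro Hes. exact (Hmin e (conj Xe Hae) Hes).
Qed.

Lemma countable_bounded (x : nat -> K) : exists c, forall n, lt (x n) c.
Proof.
  apply NNPP; intro Hn. apply not_countable, (size_kappa_range_countable x).
  apply unbounded_size_kappa. intro c. apply NNPP; intro Hc. apply Hn. exists c. intro n.
  apply NNPP; intro Hnc. apply Hc. exists (x n). split; [exists n; reflexivity|].
  apply not_lt_le, Hnc.
Qed.

Lemma countable_sup (x : nat -> K) :
  exists xi, (forall n, le lt (x n) xi) /\ forall b, lt b xi -> exists n, lt b (x n).
Proof.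
  destruct (well_founded_min (fun u => forall n, le lt (x n) u) lt_wf) as [xi [Hub Hmin]].
  { destruct (countable_bounded x) as [c Hc]. exists c. intro n. left; apply Hc. }
  exists xi. split; [exact Hub|]. intros b Hb. apply NNPP; intro Hn.
  apply (Hmin b); [|exact Hb]. intro n. apply not_lt_le. intro H. apply Hn. exists n; exact H.
Qed.

Definition closed_under (g : K -> K) (xi : K) : Prop := forall z, lt z xi -> lt (g z) xi.

Lemma club_step E1 g : club lt E1 ->
  forall c, exists y, E1 y /\ le lt c y /\ forall z, lt z c -> lt (g z) y.
Proof.
  intros [_ HU] c.
  destruct (small_bounded (small_image g (@segment_small c))) as [c' Hc'].
  assert (Hm : exists m, le lt c m /\ le lt c' m).
  { destruct (classic (lt c c')) as [H|H];
      [exists c'; split; [left; exact H|right; reflexivity]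
      |exists c; split; [right; reflexivity|apply not_lt_le, H]]. }
  destruct Hm as [m [Hcm Hc'm]]. destruct (HU m) as [y [Ey Hmy]].
  exists y. split; [exact Ey|split].
  - destruct Hcm as [H| <-]; [left; exact (lt_le_trans H Hmy)|exact Hmy].
  - intros z Hz. apply (lt_le_trans (y := m)); [|exact Hmy].
    apply (lt_le_trans (y := c')); [|exact Hc'm]. apply Hc'. exists z. split; auto.
Qed.

(* The club is reached as the supremum of an ω-chain in E1, each step above the
   g-image of the previous one. *)
Lemma club_closed_under E1 g : club lt E1 -> club lt (fun xi => E1 xi /\ closed_under g xi).
Proof.
  intro HE1. pose proof HE1 as [HC _]. split.
  - intros a [c [[Ec _] Hca]] Hlim. split.
    + apply HC. { exists c. split; assumption. }
      intros b Hb. destruct (Hlim b Hb) as [c' [[Ec' _] Hc']]. exists c'. split; assumption.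
    + intros z Hz. destruct (Hlim z Hz) as [c' [[_ Hg] [Hzc' Hc'a]]]. exact (lt_trans (Hg z Hzc') Hc'a).
  - intro a.
    pose (step c := constructive_indefinite_description _ (club_step g HE1 c)).
    pose (x := fix x n := match n with 0 => a | S n => proj1_sig (step (x n)) end).
    assert (Hx : forall n, E1 (x (S n)) /\ le lt (x n) (x (S n)) /\
                           forall z, lt z (x n) -> lt (g z) (x (S n))).
    { intro n. exact (proj2_sig (step (x n))). }
    destruct (countable_sup x) as [xi [Hub Hlub]].
    exists xi. split; [split|exact (Hub 0)].
    + destruct (classic (forall n, lt (x n) xi)) as [Hall|Hnall].
      * apply HC. { exists (x 1). split; [exact (proj1 (Hx 0))|apply Hall]. }
        intros b Hb. destruct (Hlub b Hb) as [n Hn]. exists (x (S n)).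
        split; [exact (proj1 (Hx n))|split; [|apply Hall]].
        exact (lt_le_trans Hn (proj1 (proj2 (Hx n)))).
      * apply not_all_ex_not in Hnall. destruct Hnall as [n Hn].
        assert (Hxn : x n = xi) by (destruct (Hub n); tauto).
        replace xi with (x (S n)); [exact (proj1 (Hx n))|].
        apply le_antisym; [apply Hub|rewrite <- Hxn; exact (proj1 (proj2 (Hx n)))].
    + intros z Hz. destruct (Hlub z Hz) as [n Hn].
      exact (lt_le_trans (proj2 (proj2 (Hx n)) z Hn) (Hub (S n))).
Qed.

Lemma not_set2_below_image E E1 g al be a :
  (forall xi, E xi -> closed_under g xi) -> is_next lt E1 al be ->
  le lt be a -> lt a (g al) -> ~ set2 lt E E1 a.
Proof.
  intros HE [E1be [Halbe _]] Hbea Hag [xi [Exi [s [[_ [_ Hmin]] [Hxia Has]]]]].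
  (* otherwise s_{E1}(xi) <= be <= a < s_{E1}(xi) *)
  assert (Hbexi : le lt be xi).
  { apply not_lt_le. intro Hxibe.
    exact (lt_irrefl (lt_le_trans Has (le_trans (Hmin be E1be Hxibe) Hbea))). }
  assert (Hgxi : lt (g al) xi) by exact (HE xi Exi al (lt_le_trans Halbe Hbexi)).
  exact (lt_irrefl (lt_le_trans Hag (le_trans (or_introl Hgxi) Hxia))).
Qed.

Definition next_after (E1 A : K -> Prop) (al : K) : K := next_in A (next_in E1 al).

Lemma next_after_dominates E1 A g :
  club lt E1 -> size_kappa A ->
  small (fun x => A x /\ ~ set2 lt (fun xi => E1 xi /\ closed_under g xi) E1 x) ->
  le_star lt g (next_after E1 A).
Proof.
  intros HE1 HA Hsmall. destruct (small_bounded Hsmall) as [gam Hgam].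
  apply (small_subset (Y := fun al => lt al gam)); [|apply segment_small].
  intros al Hal.
  pose proof (next_in_spec E1 (club_exists_gt HE1 al)) as Hbe.
  pose proof (next_in_spec A (size_kappa_exists_gt HA (next_in E1 al))) as [Aa [Hbea _]].
  apply (lt_trans (lt_trans (proj1 (proj2 Hbe)) Hbea)). apply Hgam. split; [exact Aa|].
  exact (not_set2_below_image (fun xi Hxi => proj2 Hxi) Hbe (or_introl Hbea) Hal).
Qed.
End RegularCardinal.

(* Unreapedness and minimality of F only identify |F| with r(κ); the bound
   d(κ) <= |F| does not use them. *)
Theorem lemma3p4 (K : Type) (lt : K -> K -> Prop)
  (Hk : regular_uncountable_cardinal lt)
  (F : (K -> Prop) -> Prop)
  (HFkk : in_kk F)
  (HFunr : unreaped F)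
  (HFmin : forall G : (K -> Prop) -> Prop, in_kk G -> unreaped G -> card_le F G)
  (E1 : K -> Prop) (HE1 : club lt E1)
  (Hcov : forall E : K -> Prop, club lt E -> (forall x, E x -> E1 x) ->
            exists A, F A /\ small (fun x => A x /\ ~ set2 lt E E1 x)) :
  exists D : (K -> K) -> Prop, dominating lt D /\ card_le D F.
Proof.
  exists (fun f => exists A, F A /\ f = next_after lt E1 A). split.
  - intro g.
    destruct (Hcov _ (club_closed_under Hk g HE1) (fun x Hx => proj1 Hx)) as [A [FA Hsmall]].
    exists (next_after lt E1 A). split; [exists A; split; [exact FA|reflexivity]|].
    exact (next_after_dominates Hk HE1 (HFkk A FA) Hsmall).
  - apply card_le_image.
Qed.
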